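(* For a regular $T_1$-space $X$ the following are equivalent: (1) $X$ is metrizable; (2) $X$ has a base which is $\sigma$-discrete at non-isolated points; (3) $X$ has a base which is $\sigma$-locally finite at non-isolated points.
   Context: $I(X)$ is the set of isolated points. A family is locally finite (resp. discrete) at non-isolated points if each $x\in X\setminus I(X)$ has a neighborhood meeting at most finitely many (resp. at most one) of its members. A base $\mathcal{B}=\bigcup_{i\in\mathbb{N}}\mathcal{B}_i$ is $\sigma$-locally finite (resp. $\sigma$-discrete) at non-isolated points if each $\mathcal{B}_i$ is locally finite (resp. discrete) at non-isolated points. *)

From Stdlib Require Import Reals List.
Open Scope R_scope.

Record topology (X : Type) := {
  is_open : (X -> Prop) -> Prop;
  open_full : is_open (fun _ => True);
  open_inter : forall U V, is_open U -> is_open V -> is_open (fun x => U x /\ V x);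
  open_union : forall F : (X -> Prop) -> Prop,
      (forall U, F U -> is_open U) -> is_open (fun x => exists U, F U /\ U x)
}.
Arguments is_open {X} t U.

Definition is_closed {X} (t : topology X) (F : X -> Prop) : Prop :=
  is_open t (fun x => ~ F x).

Definition T1_space {X} (t : topology X) : Prop :=
  forall x y : X, x <> y -> exists U, is_open t U /\ U x /\ ~ U y.

Definition regular_space {X} (t : topology X) : Prop :=
  forall (x : X) (F : X -> Prop), is_closed t F -> ~ F x ->
    exists U V, is_open t U /\ is_open t V /\ U x /\ (forall y, F y -> V y) /\
                (forall y, ~ (U y /\ V y)).

Definition is_metric {X} (d : X -> X -> R) : Prop :=
  (forall x y, d x y = 0 <-> x = y) /\
  (forall x y, d x y = d y x) /\
  (forall x y z, d x z <= d x y + d y z).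

Definition metric_open {X} (d : X -> X -> R) (U : X -> Prop) : Prop :=
  forall x, U x -> exists eps, 0 < eps /\ forall y, d x y < eps -> U y.

Definition metrizable {X} (t : topology X) : Prop :=
  exists d : X -> X -> R, is_metric d /\ forall U, is_open t U <-> metric_open d U.

Definition isolated {X} (t : topology X) (x : X) : Prop :=
  is_open t (fun y => y = x).

Definition meets {X} (A W : X -> Prop) : Prop := exists y, A y /\ W y.

Definition locally_finite_nonisol {X} (t : topology X) (F : (X -> Prop) -> Prop) : Prop :=
  forall x, ~ isolated t x ->
    exists W, is_open t W /\ W x /\
      exists l : list (X -> Prop), forall A, F A -> meets A W -> In A l.

Definition discrete_nonisol {X} (t : topology X) (F : (X -> Prop) -> Prop) : Prop :=
  forall x, ~ isolated t x ->
    exists W, is_open t W /\ W x /\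
      forall A B, F A -> F B -> meets A W -> meets B W -> A = B.

Definition is_base {X} (t : topology X) (B : (X -> Prop) -> Prop) : Prop :=
  (forall U, B U -> is_open t U) /\
  (forall U x, is_open t U -> U x -> exists V, B V /\ V x /\ forall y, V y -> U y).

Definition sigma_union {X} (Bs : nat -> (X -> Prop) -> Prop) : (X -> Prop) -> Prop :=
  fun U => exists i, Bs i U.

Definition has_sigma_discrete_base_nonisol {X} (t : topology X) : Prop :=
  exists Bs : nat -> (X -> Prop) -> Prop,
    is_base t (sigma_union Bs) /\ forall i, discrete_nonisol t (Bs i).

Definition has_sigma_locally_finite_base_nonisol {X} (t : topology X) : Prop :=
  exists Bs : nat -> (X -> Prop) -> Prop,
    is_base t (sigma_union Bs) /\ forall i, locally_finite_nonisol t (Bs i).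

(* (2) => (3) is immediate.  (1) => (2) is Stone's theorem, which even gives a
   base that is sigma-discrete everywhere; it uses a well-ordering of X.
   (3) => (1) follows the Nagata-Smirnov argument.  Local finiteness is only
   needed at non-isolated points because the closure of a union of sets can only
   gain non-isolated points; this makes unions of closures of members of such a
   family closed, which yields
   - normality, hence the shrinking property, hence Urysohn functions
     (constructed here by the dyadic method);
   - an explicit metric, the weighted supremum of countably many families of
     Urysohn functions attached to the basic sets, whose continuity at a
     non-isolated point again comes from local finiteness. *)

From Stdlib Require Import Reals List Lra Lia Classical ClassicalEpsilon
  FunctionalExtensionality PropExtensionality Cantor.
From mathcomp Require eqtype choice boolp wochoice.
Set Bullet Behavior "Strict Subproofs".
Open Scope R_scope.

Section Topology.
Context {X : Type} (t : topology X).

Lemma open_ext (U V : X -> Prop) :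
  is_open t U -> (forall x, U x <-> V x) -> is_open t V.
Proof.
  intros HU H. replace V with U; [exact HU|].
  apply functional_extensionality; intro x; apply propositional_extensionality, H.
Qed.

Lemma open_local (U : X -> Prop) :
  (forall x, U x -> exists W, is_open t W /\ W x /\ forall y, W y -> U y) ->
  is_open t U.
Proof.
  intros H.
  apply open_ext with (fun x => exists W, (is_open t W /\ forall y, W y -> U y) /\ W x).
  - apply open_union. intros W [HW _]; exact HW.
  - intros x; split.
    + intros [W [[_ HWU] Wx]]; auto.
    + intros Ux; destruct (H x Ux) as [W [HW [Wx HWU]]]; exists W; auto.
Qed.

Lemma open_compl_closed (U : X -> Prop) : is_open t U -> is_closed t (fun x => ~ U x).
Proof.
  intros HU. apply open_ext with U; [exact HU|].
  intros x; split; [tauto | apply NNPP].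
Qed.

Lemma common_nbhd {A : Type} (x : X) (P : A -> (X -> Prop) -> Prop) (l : list A) :
  (forall a W W', P a W -> (forall y, W' y -> W y) -> P a W') ->
  (forall a, In a l -> exists W, is_open t W /\ W x /\ P a W) ->
  exists W, is_open t W /\ W x /\ forall a, In a l -> P a W.
Proof.
  intros Hshrink; induction l as [|a l IH]; intros H.
  - exists (fun _ => True); repeat split; [apply open_full | intros a []].
  - destruct IH as [W1 [HW1 [W1x HP1]]]; [intros b Hb; apply H; right; exact Hb|].
    destruct (H a (or_introl eq_refl)) as [W2 [HW2 [W2x HP2]]].
    exists (fun y => W1 y /\ W2 y); repeat split; [apply open_inter; auto | auto | auto |].
    intros b [<- | Hb].
    + apply Hshrink with W2; [exact HP2 | tauto].
    + apply Hshrink with W1; [apply HP1, Hb | tauto].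
Qed.

Definition closure (A : X -> Prop) (x : X) : Prop :=
  forall U, is_open t U -> U x -> meets A U.

Lemma closure_incl (A : X -> Prop) x : A x -> closure A x.
Proof. intros Ax U _ Ux; exists x; auto. Qed.

Lemma not_closure_nbhd (A : X -> Prop) x :
  ~ closure A x -> exists U, is_open t U /\ U x /\ ~ meets A U.
Proof.
  intros Hx. apply NNPP; intro Hno; apply Hx.
  intros U HU Ux. apply NNPP; intro Hm. apply Hno; exists U; auto.
Qed.

(* The union of the closures of the members of a subfamily of a family that is
   locally finite at non-isolated points is closed (isolated points are never
   limit points, so only non-isolated points need local finiteness). *)
Lemma closure_union_closed (G Q : (X -> Prop) -> Prop) :
  locally_finite_nonisol t G ->
  is_closed t (fun x => exists B, G B /\ Q B /\ closure B x).
Proof.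
  intros Hlf. apply open_local. intros x Hx.
  destruct (classic (isolated t x)) as [Hiso | Hiso].
  { exists (fun y => y = x); repeat split; auto. intros y ->; exact Hx. }
  destruct (Hlf x Hiso) as [W [HW [Wx [l Hl]]]].
  (* shrink W so that it misses every listed member whose closure misses x *)
  destruct (common_nbhd x (fun B W' => G B -> Q B -> ~ meets B W') l)
    as [W' [HW' [W'x HW'l]]].
  - intros B W1 W2 H1 H12 GB QB [z [Bz W2z]]. apply (H1 GB QB); exists z; auto.
  - intros B _. destruct (classic (G B /\ Q B)) as [[GB QB] | HGQ].
    + destruct (not_closure_nbhd B x) as [U [HU [Ux HUB]]].
      { intro Hcl; apply Hx; exists B; auto. }
      exists U; auto.
    + exists (fun _ => True); repeat split; [apply open_full | tauto].
  - exists (fun y => W y /\ W' y); repeat split; [apply open_inter; auto | auto | auto |].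
    intros y [Wy W'y] [B [GB [QB HclB]]].
    destruct (HclB (fun y => W y /\ W' y)) as [z [Bz [Wz W'z]]];
      [apply open_inter; auto | auto |].
    apply (HW'l B (Hl B GB (ex_intro _ z (conj Bz Wz))) GB QB). exists z; auto.
Qed.

End Topology.

Section Normality.
Context {X : Type} (t : topology X).
Hypothesis Hreg : regular_space t.
Variable Bs : nat -> (X -> Prop) -> Prop.
Hypothesis Hbase : is_base t (sigma_union Bs).
Hypothesis Hlf : forall n, locally_finite_nonisol t (Bs n).

Lemma basic_open n B : Bs n B -> is_open t B.
Proof. intros HB; apply (proj1 Hbase); exists n; exact HB. Qed.

Lemma basic_closure_within (U : X -> Prop) x : is_open t U -> U x ->
  exists m C, Bs m C /\ C x /\ forall y, closure t C y -> U y.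
Proof.
  intros HU Ux.
  destruct (Hreg x (fun y => ~ U y)) as [U' [V' [HU' [HV' [U'x [HUV' Hdisj]]]]]];
    [apply open_compl_closed, HU | tauto |].
  destruct (proj2 Hbase U' x HU' U'x) as [C [[m HC] [Cx HCU']]].
  exists m, C; repeat split; auto.
  intros y Hcl. apply NNPP; intro nUy.
  destruct (Hcl V' HV' (HUV' y nUy)) as [z [Cz V'z]].
  apply (Hdisj z); auto.
Qed.

Definition avoids (E C : X -> Prop) : Prop := forall y, closure t C y -> ~ E y.
Definition level_union (E : X -> Prop) n x : Prop :=
  exists C, Bs n C /\ avoids E C /\ C x.
Definition level_closure (E : X -> Prop) n x : Prop :=
  exists C, Bs n C /\ avoids E C /\ closure t C x.
Definition clear_upto (E : X -> Prop) n x : Prop :=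
  forall k, (k <= n)%nat -> ~ level_closure E k x.

Lemma level_union_open E n : is_open t (level_union E n).
Proof.
  apply open_local. intros x [C [HC [HCS Cx]]].
  exists C; repeat split; [eapply basic_open; eauto | exact Cx |].
  intros y Cy; exists C; auto.
Qed.

Lemma level_closure_closed E n : is_closed t (level_closure E n).
Proof. apply closure_union_closed, Hlf. Qed.

Lemma level_union_closure E n x : level_union E n x -> level_closure E n x.
Proof. intros [C [HC [HCS Cx]]]; exists C; repeat split; auto; apply closure_incl, Cx. Qed.

Lemma level_closure_avoids E n x : level_closure E n x -> ~ E x.
Proof. intros [C [_ [HCS Hcl]]]; apply HCS, Hcl. Qed.

Lemma level_union_cover E x : is_closed t E -> ~ E x -> exists n, level_union E n x.
Proof.
  intros HS nSx.
  destruct (basic_closure_within (fun y => ~ E y) x HS nSx) as [m [C [HC [Cx HCS]]]].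
  exists m, C; auto.
Qed.

Lemma clear_upto_open E n : is_open t (clear_upto E n).
Proof.
  induction n as [|n IH].
  - apply open_ext with (fun x => ~ level_closure E 0 x); [apply level_closure_closed|].
    intros x; split; intros H.
    + intros k Hk; replace k with 0%nat by lia; exact H.
    + apply H; lia.
  - apply open_ext with (fun x => clear_upto E n x /\ ~ level_closure E (S n) x).
    + apply open_inter; [exact IH | apply level_closure_closed].
    + intros x; split.
      * intros [H1 H2] k Hk.
        destruct (Nat.eq_dec k (S n)) as [-> | Hne]; [exact H2 | apply H1; lia].
      * intros H; split; [intros k Hk; apply H; lia | apply H; lia].
Qed.

Definition separating_side (A C : X -> Prop) x : Prop :=
  exists n, level_union C n x /\ clear_upto A n x.

Lemma separating_side_open A C : is_open t (separating_side A C).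
Proof.
  apply open_local. intros x [n Hx].
  exists (fun y => level_union C n y /\ clear_upto A n y); repeat split; try tauto.
  - apply open_inter; [apply level_union_open | apply clear_upto_open].
  - intros y Hy; exists n; exact Hy.
Qed.

Lemma separating_side_contains A C x :
  is_closed t C -> A x -> ~ C x -> separating_side A C x.
Proof.
  intros HC Ax nCx. destruct (level_union_cover C x HC nCx) as [n Hn].
  exists n; split; [exact Hn|]. intros k _ Hk. exact (level_closure_avoids A k x Hk Ax).
Qed.

Lemma separating_sides_disjoint A C x :
  separating_side A C x -> separating_side C A x -> False.
Proof.
  intros [n [Un Cn]] [m [Um Cm]]. destruct (Nat.le_ge_cases n m) as [Hnm | Hmn].
  - apply (Cm n Hnm), level_union_closure, Un.
  - apply (Cn m Hmn), level_union_closure, Um.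
Qed.

Lemma normal (A C : X -> Prop) :
  is_closed t A -> is_closed t C -> (forall x, A x -> C x -> False) ->
  exists U V, is_open t U /\ is_open t V /\ (forall x, A x -> U x) /\
    (forall x, C x -> V x) /\ (forall x, U x -> V x -> False).
Proof.
  intros HA HC Hdisj. exists (separating_side A C), (separating_side C A).
  repeat split; try apply separating_side_open.
  - intros x Ax; apply separating_side_contains; eauto.
  - intros x Cx; apply separating_side_contains; eauto.
  - apply separating_sides_disjoint.
Qed.

Lemma shrinking (F G : X -> Prop) :
  is_closed t F -> is_open t G -> (forall x, F x -> G x) ->
  exists O K, is_open t O /\ is_closed t K /\ (forall x, F x -> O x) /\
    (forall x, O x -> K x) /\ (forall x, K x -> G x).
Proof.
  intros HF HG HFG.
  destruct (normal F (fun x => ~ G x) HF (open_compl_closed t G HG))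
    as [U [V [HU [HV [HFU [HGV HUV]]]]]]; [intros x Fx nGx; apply nGx, HFG, Fx|].
  exists U, (fun x => ~ V x); split; [exact HU|]; split; [apply open_compl_closed, HV|].
  split; [exact HFU|]; split.
  - intros x Ux Vx; exact (HUV x Ux Vx).
  - intros x nVx; apply NNPP; intro nGx; apply nVx, HGV, nGx.
Qed.

End Normality.

Fixpoint rsum (g : nat -> R) (N : nat) : R :=
  match N with O => 0 | S N' => rsum g N' + g N' end.

Lemma rsum_le g g' N : (forall k, (k < N)%nat -> g k <= g' k) -> rsum g N <= rsum g' N.
Proof.
  induction N as [|N IH]; intros H; simpl; [lra|].
  assert (rsum g N <= rsum g' N) by (apply IH; intros; apply H; lia).
  assert (g N <= g' N) by (apply H; lia). lra.
Qed.

Lemma rsum_add f g N : rsum (fun k => f k + g k) N = rsum f N + rsum g N.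
Proof. induction N as [|N IH]; simpl; [lra|]. rewrite IH; lra. Qed.

Lemma rsum_pairs g N : rsum g (2 * N) = rsum (fun k => g (2 * k)%nat + g (2 * k + 1)%nat) N.
Proof.
  induction N as [|N IH]; [reflexivity|].
  replace (2 * S N)%nat with (S (S (2 * N))) by lia. cbn [rsum]. rewrite IH.
  replace (S (2 * N)) with (2 * N + 1)%nat by lia. ring.
Qed.

Lemma rsum_shift g N : rsum (fun k => g (S k)) N = rsum g N - g O + g N.
Proof. induction N as [|N IH]; simpl; [lra|]. rewrite IH; lra. Qed.

Lemma rsum_bounds g N : (forall k, (k < N)%nat -> 0 <= g k <= 1) -> 0 <= rsum g N <= INR N.
Proof.
  induction N as [|N IH]; intros H; simpl rsum; [simpl; lra|].
  assert (0 <= rsum g N <= INR N) by (apply IH; intros; apply H; lia).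
  assert (0 <= g N <= 1) by (apply H; lia). rewrite S_INR; lra.
Qed.

Lemma rsum_const g N c : (forall k, (k < N)%nat -> g k = c) -> rsum g N = INR N * c.
Proof.
  induction N as [|N IH]; intros H; simpl rsum; [simpl; lra|].
  rewrite IH by (intros; apply H; lia). rewrite (H N) by lia. rewrite S_INR; lra.
Qed.

Definition indicator (P : Prop) : R := if excluded_middle_informative P then 1 else 0.

Lemma indicator_le (P Q : Prop) : (P -> Q) -> indicator P <= indicator Q.
Proof.
  unfold indicator; intros H.
  destruct (excluded_middle_informative P), (excluded_middle_informative Q); tauto || lra.
Qed.

Lemma indicator_bounds P : 0 <= indicator P <= 1.
Proof. unfold indicator; destruct (excluded_middle_informative P); lra. Qed.

Lemma indicator_true (P : Prop) : P -> indicator P = 1.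
Proof. unfold indicator; destruct (excluded_middle_informative P); tauto. Qed.

Lemma indicator_false (P : Prop) : ~ P -> indicator P = 0.
Proof. unfold indicator; destruct (excluded_middle_informative P); tauto. Qed.

Lemma pow2_pos n : 0 < 2 ^ n.
Proof. apply pow_lt; lra. Qed.

Lemma inv_pow2_small eps : 0 < eps -> exists n, / 2 ^ n < eps.
Proof.
  intros He. destruct (INR_unbounded (/ eps)) as [n Hn]. exists n.
  assert (Hlt : INR n < 2 ^ n).
  { clear. induction n as [|n IH]; [simpl; lra|].
    rewrite S_INR. simpl pow. assert (1 <= 2 ^ n) by (apply pow_R1_Rle; lra). lra. }
  assert (0 < / eps) by (apply Rinv_0_lt_compat, He).
  rewrite <- (Rinv_inv eps). apply Rinv_lt_contravar; [apply Rmult_lt_0_compat|]; lra.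
Qed.

Lemma INR_S_ge1 k : 1 <= INR (S k).
Proof. rewrite S_INR. pose proof (pos_INR k). lra. Qed.

Lemma inv_INR_small eps : 0 < eps -> exists N, / INR (S N) < eps.
Proof.
  intros He. destruct (INR_unbounded (/ eps)) as [N HN]. exists N.
  assert (0 < / eps) by (apply Rinv_0_lt_compat, He).
  rewrite <- (Rinv_inv eps). apply Rinv_lt_contravar; [apply Rmult_lt_0_compat|];
    rewrite ?S_INR; lra.
Qed.

Definition continuous_real {X} (t : topology X) (h : X -> R) : Prop :=
  forall x eps, 0 < eps ->
    exists W, is_open t W /\ W x /\ forall y, W y -> Rabs (h y - h x) < eps.

(* At stage n we build open sets O_(n,0) < ... < O_(n,2^n) = G (each contained,
   via a closed set K_(n,j), in the next one) with F inside O_(n,0); stage n+1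
   inserts a new set between any two consecutive ones.  The proportion of the
   sets O_(n,j) containing x increases with n and its limit is h x. *)
Section Urysohn.
Context {X : Type} (t : topology X).
Hypothesis Hshrink : forall F G : X -> Prop,
  is_closed t F -> is_open t G -> (forall x, F x -> G x) ->
  exists O K, is_open t O /\ is_closed t K /\ (forall x, F x -> O x) /\
    (forall x, O x -> K x) /\ (forall x, K x -> G x).

Definition interpolates (A B : X -> Prop) (p : (X -> Prop) * (X -> Prop)) : Prop :=
  is_open t (fst p) /\ is_closed t (snd p) /\ (forall x, A x -> fst p x) /\
  (forall x, fst p x -> snd p x) /\ (forall x, snd p x -> B x).

Definition interpolant (A B : X -> Prop) : (X -> Prop) * (X -> Prop) :=
  epsilon (inhabits (B, fun _ => True)) (interpolates A B).

Lemma interpolant_spec A B : is_closed t A -> is_open t B -> (forall x, A x -> B x) ->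
  interpolates A B (interpolant A B).
Proof.
  intros HA HB HAB. unfold interpolant. apply epsilon_spec.
  destruct (Hshrink A B HA HB HAB) as [O [K H]]. exists (O, K); exact H.
Qed.

Variables F G : X -> Prop.
Hypothesis HF : is_closed t F.
Hypothesis HG : is_open t G.
Hypothesis HFG : forall x, F x -> G x.

Fixpoint dyadic (n : nat) : nat -> (X -> Prop) * (X -> Prop) :=
  match n with
  | O => fun j => match j with O => interpolant F G | _ => (G, fun _ => True) end
  | S n' => fun j => if Nat.even j then dyadic n' (Nat.div2 j)
           else interpolant (snd (dyadic n' (Nat.div2 j))) (fst (dyadic n' (S (Nat.div2 j))))
  end.

Definition Ody n j := fst (dyadic n j).
Definition Kdy n j := snd (dyadic n j).

Lemma dyadic_even n k : dyadic (S n) (2 * k) = dyadic n k.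
Proof. cbn [dyadic]. rewrite Nat.even_even, Nat.div2_double. reflexivity. Qed.

Lemma dyadic_odd n k : dyadic (S n) (2 * k + 1) = interpolant (Kdy n k) (Ody n (S k)).
Proof. cbn [dyadic]. rewrite Nat.even_odd, Nat.div2_odd'. reflexivity. Qed.

Definition dyadic_chain n : Prop :=
  (forall j, (j <= 2 ^ n)%nat -> is_open t (Ody n j)) /\
  (forall j, (j < 2 ^ n)%nat -> is_closed t (Kdy n j) /\
     (forall x, Ody n j x -> Kdy n j x) /\ (forall x, Kdy n j x -> Ody n (S j) x)) /\
  (forall x, F x -> Ody n O x) /\ Ody n (2 ^ n) = G.

Lemma dyadic_chain_insert n k : dyadic_chain n -> (k < 2 ^ n)%nat ->
  interpolates (Kdy n k) (Ody n (S k)) (interpolant (Kdy n k) (Ody n (S k))).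
Proof.
  intros [Hopen [Hstep _]] Hk. destruct (Hstep k Hk) as [HK [_ HKO]].
  apply interpolant_spec; [exact HK | apply Hopen; lia | exact HKO].
Qed.

Lemma dyadic_chain_all n : dyadic_chain n.
Proof.
  induction n as [|n IH].
  - destruct (interpolant_spec F G HF HG HFG) as [HO [HK [HFO [HOK HKG]]]].
    split; [|split; [|split]]; [| | exact HFO | reflexivity].
    + intros [|[|j]] Hj; [exact HO | exact HG | simpl in Hj; lia].
    + intros j Hj. simpl in Hj. replace j with O by lia. auto.
  - pose proof (dyadic_chain_insert n) as Hins.
    destruct IH as [Hopen [Hstep [HFO HtopG]]].
    unfold dyadic_chain, Ody, Kdy; rewrite Nat.pow_succ_r'.
    split; [|split; [|split]].
    + intros j Hj. destruct (Nat.Even_or_Odd j) as [[k ->] | [k ->]].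
      * rewrite dyadic_even. apply Hopen; lia.
      * rewrite dyadic_odd. apply Hins; [split; auto | lia].
    + intros j Hj. destruct (Nat.Even_or_Odd j) as [[k ->] | [k ->]].
      * destruct (Hstep k) as [_ [HOK _]]; [lia|].
        destruct (Hins k) as [_ [_ [HKO' _]]]; [split; auto | lia |].
        replace (S (2 * k)) with (2 * k + 1)%nat by lia.
        rewrite dyadic_even, dyadic_odd. split; [apply Hstep; lia | split; auto].
      * destruct (Hins k) as [_ [HK' [_ [HOK' HKO']]]]; [split; auto | lia |].
        replace (S (2 * k + 1)) with (2 * S k)%nat by lia.
        rewrite dyadic_odd, dyadic_even. auto.
    + change (dyadic (S n) 0) with (dyadic (S n) (2 * 0)). rewrite dyadic_even. exact HFO.
    + rewrite dyadic_even. exact HtopG.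
Qed.

Lemma Ody_mono n j j' x : (j <= j')%nat -> (j' <= 2 ^ n)%nat -> Ody n j x -> Ody n j' x.
Proof.
  intros Hjj' Hj'. induction Hjj' as [|j' Hjj' IH]; [auto|].
  intros Hx. destruct (dyadic_chain_all n) as [_ [Hstep _]].
  destruct (Hstep j') as [_ [HOK HKO]]; [lia|]. apply HKO, HOK, IH; [lia | exact Hx].
Qed.

Lemma Ody_in_G n j x : (j <= 2 ^ n)%nat -> Ody n j x -> G x.
Proof.
  intros Hj Hx. destruct (dyadic_chain_all n) as [_ [_ [_ HtopG]]].
  rewrite <- HtopG. apply Ody_mono with j; auto.
Qed.

Definition dyadic_count n x : R := rsum (fun j => indicator (Ody n j x)) (2 ^ n).

Lemma dyadic_count_step n x :
  2 * dyadic_count n x <= dyadic_count (S n) x <= 2 * dyadic_count n x + 1.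
Proof.
  unfold dyadic_count. rewrite Nat.pow_succ_r', rsum_pairs.
  assert (Hnew : forall k, (k < 2 ^ n)%nat ->
    (Ody n k x -> Ody (S n) (2 * k + 1) x) /\ (Ody (S n) (2 * k + 1) x -> Ody n (S k) x)).
  { intros k Hk. destruct (dyadic_chain_insert n k (dyadic_chain_all n) Hk)
      as [_ [_ [HKO [HOK HKO']]]].
    destruct (dyadic_chain_all n) as [_ [Hstep _]]. destruct (Hstep k Hk) as [_ [HOK0 _]].
    unfold Ody at 2 3; rewrite dyadic_odd. split; intros; auto. }
  assert (Hold : forall k, Ody (S n) (2 * k) x = Ody n k x)
    by (intros k; unfold Ody; rewrite dyadic_even; reflexivity).
  split.
  - replace (2 * rsum (fun j => indicator (Ody n j x)) (2 ^ n)) with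
      (rsum (fun k => indicator (Ody n k x) + indicator (Ody n k x)) (2 ^ n))
      by (rewrite rsum_add; lra).
    apply rsum_le. intros k Hk. rewrite Hold.
    assert (indicator (Ody n k x) <= indicator (Ody (S n) (2 * k + 1) x))
      by (apply indicator_le, Hnew, Hk). lra.
  - apply Rle_trans with
      (rsum (fun k => indicator (Ody n k x) + indicator (Ody n (S k) x)) (2 ^ n)).
    + apply rsum_le. intros k Hk. rewrite Hold.
      assert (indicator (Ody (S n) (2 * k + 1) x) <= indicator (Ody n (S k) x))
        by (apply indicator_le, Hnew, Hk). lra.
    + rewrite rsum_add, (rsum_shift (fun j => indicator (Ody n j x))).
      pose proof (indicator_bounds (Ody n O x)).
      pose proof (indicator_bounds (Ody n (2 ^ n) x)). lra.
Qed.

Lemma dyadic_count_shift n a b :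
  (forall k, (k < 2 ^ n)%nat -> Ody n k a -> Ody n (S k) b) ->
  dyadic_count n a <= dyadic_count n b + 1.
Proof.
  intros Hab. unfold dyadic_count.
  apply Rle_trans with (rsum (fun k => indicator (Ody n (S k) b)) (2 ^ n)).
  - apply rsum_le; intros k Hk; apply indicator_le, Hab, Hk.
  - rewrite (rsum_shift (fun j => indicator (Ody n j b))).
    pose proof (indicator_bounds (Ody n O b)).
    pose proof (indicator_bounds (Ody n (2 ^ n) b)). lra.
Qed.

Definition approx n x : R := dyadic_count n x / 2 ^ n.

Lemma approx_step n x : approx n x <= approx (S n) x <= approx n x + / 2 ^ (S n).
Proof.
  unfold approx. destruct (dyadic_count_step n x). pose proof (pow2_pos n). simpl pow.
  split; apply (Rmult_le_reg_r (2 * 2 ^ n)); try lra; field_simplify; lra.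
Qed.

Lemma approx_bounds n x : 0 <= approx n x <= 1.
Proof.
  unfold approx, dyadic_count. pose proof (pow2_pos n).
  assert (Hc : 0 <= rsum (fun j => indicator (Ody n j x)) (2 ^ n) <= 2 ^ n).
  { replace (2 ^ n) with (INR (2 ^ n)) by (rewrite pow_INR; simpl; f_equal; lra).
    apply rsum_bounds. intros; apply indicator_bounds. }
  split.
  - apply Rmult_le_pos; [lra | apply Rlt_le, Rinv_0_lt_compat; lra].
  - apply (Rmult_le_reg_r (2 ^ n)); [lra|]. field_simplify; lra.
Qed.

Lemma approx_mono n k x :
  approx n x <= approx (n + k) x <= approx n x + / 2 ^ n - / 2 ^ (n + k).
Proof.
  induction k as [|k IH]; [rewrite Nat.add_0_r; lra|].
  rewrite Nat.add_succ_r. destruct (approx_step (n + k) x).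
  assert (/ 2 ^ S (n + k) = / 2 ^ (n + k) / 2)
    by (simpl; field; apply pow_nonzero; lra). lra.
Qed.

Lemma approx_on_F n x : F x -> approx n x = 1.
Proof.
  intros Fx. unfold approx, dyadic_count. rewrite (rsum_const _ _ 1).
  - rewrite pow_INR. replace (INR 2) with 2 by (simpl; lra). field. apply pow_nonzero; lra.
  - intros k Hk. apply indicator_true. apply Ody_mono with O; [lia | lia |].
    destruct (dyadic_chain_all n) as [_ [_ [HFO _]]]. exact (HFO x Fx).
Qed.

Lemma approx_off_G n x : ~ G x -> approx n x = 0.
Proof.
  intros nGx. unfold approx, dyadic_count. rewrite (rsum_const _ _ 0).
  - unfold Rdiv; ring.
  - intros k Hk. apply indicator_false. intro Hx. apply nGx, (Ody_in_G n k); [lia | exact Hx].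
Qed.

Lemma approx_near n x : exists W, is_open t W /\ W x /\
  forall y, W y -> Rabs (approx n y - approx n x) <= / 2 ^ n.
Proof.
  destruct (common_nbhd t x (fun k W => forall y, W y ->
      (Ody n k x -> Ody n (S k) y) /\ (Ody n k y -> Ody n (S k) x))
     (seq 0 (2 ^ n))) as [W [HW [Wx HWk]]].
  - intros k W1 W2 H1 H12 y Wy. apply H1, H12, Wy.
  - intros k Hk. apply in_seq in Hk. destruct (dyadic_chain_all n) as [Hopen [Hstep _]].
    destruct (Hstep k) as [HK [HOK HKO]]; [lia|].
    destruct (classic (Ody n k x)) as [Ox | nOx].
    { exists (Ody n (S k)); split; [apply Hopen; lia|]; split; [auto|].
      intros y Oy; split; [intros _; exact Oy | intros _; apply HKO, HOK, Ox]. }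
    destruct (classic (Ody n (S k) x)) as [Ox' | nOx'].
    { exists (fun _ => True); split; [apply open_full|]; split; [exact I|].
      intros y _; split; [tauto | auto]. }
    exists (fun y => ~ Kdy n k y); split; [exact HK|]; split; [intro; apply nOx'; auto|].
    intros y nKy; split; [tauto|]. intro Oy; exfalso; apply nKy, HOK, Oy.
  - exists W; split; [exact HW|]; split; [exact Wx|]. intros y Wy.
    assert (Hk : forall k, (k < 2 ^ n)%nat -> In k (seq 0 (2 ^ n))) by (intros; apply in_seq; lia).
    assert (A1 : dyadic_count n x <= dyadic_count n y + 1)
      by (apply dyadic_count_shift; intros k Hkn; apply (HWk k (Hk k Hkn) y Wy)).
    assert (A2 : dyadic_count n y <= dyadic_count n x + 1)
      by (apply dyadic_count_shift; intros k Hkn; apply (HWk k (Hk k Hkn) y Wy)).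
    unfold approx. pose proof (pow2_pos n).
    replace (dyadic_count n y / 2 ^ n - dyadic_count n x / 2 ^ n)
      with ((dyadic_count n y - dyadic_count n x) * / 2 ^ n) by (field; lra).
    rewrite Rabs_mult, (Rabs_right (/ 2 ^ n)) by (apply Rle_ge, Rlt_le, Rinv_0_lt_compat; lra).
    rewrite <- (Rmult_1_l (/ 2 ^ n)) at 2.
    apply Rmult_le_compat_r; [apply Rlt_le, Rinv_0_lt_compat; lra | apply Rabs_le; lra].
Qed.

Definition approx_values x : R -> Prop := fun r => exists n, r = approx n x.

Lemma approx_values_bound x : bound (approx_values x).
Proof. exists 1. intros r [n ->]. apply approx_bounds. Qed.

Lemma approx_values_nonempty x : exists r, approx_values x r.
Proof. exists (approx O x), O; reflexivity. Qed.

Definition urysohn_fn x : R :=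
  proj1_sig (completeness _ (approx_values_bound x) (approx_values_nonempty x)).

Lemma urysohn_fn_lub x : is_lub (approx_values x) (urysohn_fn x).
Proof. unfold urysohn_fn; destruct completeness; assumption. Qed.

Lemma urysohn_fn_approx n x : approx n x <= urysohn_fn x <= approx n x + / 2 ^ n.
Proof.
  destruct (urysohn_fn_lub x) as [Hub Hleast]. split.
  - apply Hub; exists n; reflexivity.
  - apply Hleast. intros r [m ->]. destruct (Nat.le_ge_cases m n).
    + replace n with (m + (n - m))%nat by lia. destruct (approx_mono m (n - m) x).
      assert (0 < / 2 ^ (m + (n - m))) by apply Rinv_0_lt_compat, pow2_pos. lra.
    + replace m with (n + (m - n))%nat by lia. destruct (approx_mono n (m - n) x).
      assert (0 < / 2 ^ (n + (m - n))) by apply Rinv_0_lt_compat, pow2_pos. lra.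
Qed.

Definition urysohn_for (h : X -> R) : Prop :=
  (forall x, 0 <= h x <= 1) /\ (forall x, F x -> h x = 1) /\
  (forall x, ~ G x -> h x = 0) /\ continuous_real t h.

Lemma urysohn : exists h, urysohn_for h.
Proof.
  exists urysohn_fn. split; [|split; [|split]].
  - intros x. destruct (urysohn_fn_lub x) as [Hub Hleast]. split.
    + apply Rle_trans with (approx O x); [apply approx_bounds | apply Hub; exists O; reflexivity].
    + apply Hleast. intros r [n ->]; apply approx_bounds.
  - intros x Fx. destruct (urysohn_fn_lub x) as [Hub Hleast]. apply Rle_antisym.
    + apply Hleast. intros r [n ->]; apply approx_bounds.
    + rewrite <- (approx_on_F O x Fx). apply Hub; exists O; reflexivity.
  - intros x nGx. destruct (urysohn_fn_lub x) as [Hub Hleast]. apply Rle_antisym.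
    + apply Hleast. intros r [n ->]; rewrite (approx_off_G n x nGx); lra.
    + rewrite <- (approx_off_G O x nGx). apply Hub; exists O; reflexivity.
  - intros x eps Heps. destruct (inv_pow2_small (eps / 3)) as [n Hn]; [lra|].
    destruct (approx_near n x) as [W [HW [Wx HWn]]]. exists W; repeat split; auto.
    intros y Wy. pose proof (HWn y Wy) as Hosc. unfold Rabs in Hosc.
    destruct (urysohn_fn_approx n x), (urysohn_fn_approx n y).
    assert (0 < / 2 ^ n) by apply Rinv_0_lt_compat, pow2_pos.
    destruct (Rcase_abs (approx n y - approx n x)); apply Rabs_def1; lra.
Qed.

End Urysohn.

(* For basic sets B of level n and each level m, a Urysohn
   function h_(n,m,B) is 1 on the closures of the level-m basic sets whose
   closure lies in B and 0 off B.  The metric is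
      d x y = sup_(n,m,B) |h_(n,m,B) x - h_(n,m,B) y| / (n + m + 1).
   Near a non-isolated point only finitely many h_(n,m,B) with n, m < N are not
   identically 0, which gives the continuity of d; isolated points are trivial. *)
Section Metrization.
Context {X : Type} (t : topology X).
Hypothesis HT1 : T1_space t.
Hypothesis Hreg : regular_space t.
Variable Bs : nat -> (X -> Prop) -> Prop.
Hypothesis Hbase : is_base t (sigma_union Bs).
Hypothesis Hlf : forall n, locally_finite_nonisol t (Bs n).

Definition inner_closures (m : nat) (B : X -> Prop) (x : X) : Prop :=
  exists C, Bs m C /\ (forall y, closure t C y -> B y) /\ closure t C x.

Definition sep_fn (m : nat) (B : X -> Prop) : X -> R :=
  epsilon (inhabits (fun _ : X => 0)) (urysohn_for t (inner_closures m B) B).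

Lemma sep_fn_spec n m B : Bs n B -> urysohn_for t (inner_closures m B) B (sep_fn m B).
Proof.
  intros HB. unfold sep_fn. apply epsilon_spec, urysohn.
  - intros F G HF HG HFG. apply (shrinking t Hreg Bs Hbase Hlf); assumption.
  - apply closure_union_closed, Hlf.
  - apply (basic_open t Bs Hbase n B HB).
  - intros x [C [_ [HCB HclC]]]. apply HCB, HclC.
Qed.

Lemma sep_fn_at_point (U : X -> Prop) x : is_open t U -> U x ->
  exists n m B, Bs n B /\ (forall y, B y -> U y) /\ sep_fn m B x = 1.
Proof.
  intros HU Ux. destruct (proj2 Hbase U x HU Ux) as [B [[n HB] [Bx HBU]]].
  destruct (basic_closure_within t Hreg Bs Hbase B x) as [m [C [HC [Cx HCB]]]];
    [apply (basic_open t Bs Hbase n B HB) | exact Bx |].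
  exists n, m, B; repeat split; auto.
  destruct (sep_fn_spec n m B HB) as [_ [Hone _]]. apply Hone.
  exists C; repeat split; auto. apply closure_incl, Cx.
Qed.

Definition weighted_gap n m B x y : R :=
  Rabs (sep_fn m B x - sep_fn m B y) / INR (S (n + m)).

Lemma weighted_gap_bounds n m B x y : Bs n B ->
  0 <= weighted_gap n m B x y <= / INR (S (n + m)).
Proof.
  intros HB. unfold weighted_gap, Rdiv.
  destruct (sep_fn_spec n m B HB) as [Hbnd _].
  pose proof (Hbnd x). pose proof (Hbnd y). pose proof (INR_S_ge1 (n + m)).
  assert (0 < / INR (S (n + m))) by (apply Rinv_0_lt_compat; lra).
  assert (Habs : 0 <= Rabs (sep_fn m B x - sep_fn m B y) <= 1).
  { split; [apply Rabs_pos|]. apply Rabs_le; lra. }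
  split; [apply Rmult_le_pos; lra|]. rewrite <- (Rmult_1_l (/ INR (S (n + m)))) at 2.
  apply Rmult_le_compat_r; lra.
Qed.

Definition gaps x y : R -> Prop :=
  fun r => r = 0 \/ exists n m B, Bs n B /\ r = weighted_gap n m B x y.

Lemma gaps_bound x y : bound (gaps x y).
Proof.
  exists 1. intros r [-> | [n [m [B [HB ->]]]]]; [lra|].
  destruct (weighted_gap_bounds n m B x y HB). pose proof (INR_S_ge1 (n + m)).
  assert (/ INR (S (n + m)) <= 1) by (rewrite <- Rinv_1; apply Rinv_le_contravar; lra). lra.
Qed.

Lemma gaps_nonempty x y : exists r, gaps x y r.
Proof. exists 0; left; reflexivity. Qed.

Definition dist x y : R := proj1_sig (completeness _ (gaps_bound x y) (gaps_nonempty x y)).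

Lemma dist_lub x y : is_lub (gaps x y) (dist x y).
Proof. unfold dist; destruct completeness; assumption. Qed.

Lemma dist_ge_gap n m B x y : Bs n B -> weighted_gap n m B x y <= dist x y.
Proof. intros HB; apply (proj1 (dist_lub x y)); right; exists n, m, B; auto. Qed.

Lemma dist_le x y M : 0 <= M ->
  (forall n m B, Bs n B -> weighted_gap n m B x y <= M) -> dist x y <= M.
Proof.
  intros HM H; apply (proj2 (dist_lub x y)).
  intros r [-> | [n [m [B [HB ->]]]]]; [exact HM | apply H, HB].
Qed.

Lemma dist_nonneg x y : 0 <= dist x y.
Proof. apply (proj1 (dist_lub x y)); left; reflexivity. Qed.

Lemma dist_refl x : dist x x = 0.
Proof.
  apply Rle_antisym; [|apply dist_nonneg]. apply dist_le; [lra|]. intros n m B _.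
  unfold weighted_gap. rewrite Rminus_diag, Rabs_R0. unfold Rdiv; rewrite Rmult_0_l; lra.
Qed.

Lemma dist_sym_le x y : dist x y <= dist y x.
Proof.
  apply dist_le; [apply dist_nonneg|]. intros n m B HB.
  unfold weighted_gap. rewrite Rabs_minus_sym. apply (dist_ge_gap n m B y x HB).
Qed.

Lemma dist_triangle x y z : dist x z <= dist x y + dist y z.
Proof.
  pose proof (dist_nonneg x y); pose proof (dist_nonneg y z).
  apply dist_le; [lra|]. intros n m B HB.
  pose proof (dist_ge_gap n m B x y HB); pose proof (dist_ge_gap n m B y z HB).
  assert (weighted_gap n m B x z <= weighted_gap n m B x y + weighted_gap n m B y z); [|lra].
  unfold weighted_gap, Rdiv. rewrite <- Rmult_plus_distr_r. apply Rmult_le_compat_r.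
  - apply Rlt_le, Rinv_0_lt_compat. pose proof (INR_S_ge1 (n + m)); lra.
  - replace (sep_fn m B x - sep_fn m B z)
      with ((sep_fn m B x - sep_fn m B y) + (sep_fn m B y - sep_fn m B z)) by ring.
    apply Rabs_triang.
Qed.

Lemma dist_ball_inside n m B x y : Bs n B -> sep_fn m B x = 1 ->
  dist x y < / INR (S (n + m)) -> B y.
Proof.
  intros HB Hx Hxy. apply NNPP; intro nBy.
  destruct (sep_fn_spec n m B HB) as [_ [_ [Hzero _]]].
  pose proof (dist_ge_gap n m B x y HB) as Hgap. unfold weighted_gap in Hgap.
  rewrite Hx, (Hzero y nBy), Rminus_0_r, Rabs_R1 in Hgap. unfold Rdiv in Hgap. lra.
Qed.

Lemma dist_separates x y : dist x y = 0 -> x = y.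
Proof.
  intros H0. apply NNPP; intro Hxy. destruct (HT1 x y Hxy) as [U [HU [Ux nUy]]].
  destruct (sep_fn_at_point U x HU Ux) as [n [m [B [HB [HBU Hx]]]]].
  apply nUy, HBU, (dist_ball_inside n m B x y HB Hx).
  rewrite H0. apply Rinv_0_lt_compat. pose proof (INR_S_ge1 (n + m)); lra.
Qed.

(* Near a non-isolated point x, all functions h_(n,m,B) with m < N vary by at
   most eps: only the finitely many B of level n meeting a neighbourhood of x
   matter, the others vanish near x. *)
Lemma level_gaps_near n N x eps : ~ isolated t x -> 0 < eps ->
  exists W, is_open t W /\ W x /\ forall y, W y -> forall m B, (m < N)%nat -> Bs n B ->
    Rabs (sep_fn m B x - sep_fn m B y) <= eps.
Proof.
  intros Hiso Heps. destruct (Hlf n x Hiso) as [W0 [HW0 [W0x [l Hl]]]].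
  destruct (common_nbhd t x (fun p W => forall y, W y -> Bs n (snd p) ->
      Rabs (sep_fn (fst p) (snd p) x - sep_fn (fst p) (snd p) y) <= eps)
      (list_prod (seq 0 N) l)) as [W1 [HW1 [W1x HW1l]]].
  - intros p W1 W2 H1 H12 y Wy; apply H1, H12, Wy.
  - intros [m B] _. simpl. destruct (classic (Bs n B)) as [HB | nHB].
    + destruct (sep_fn_spec n m B HB) as [_ [_ [_ Hcont]]].
      destruct (Hcont x eps Heps) as [W2 [HW2 [W2x HW2c]]].
      exists W2; repeat split; auto. intros y Wy _.
      rewrite Rabs_minus_sym. apply Rlt_le, HW2c, Wy.
    + exists (fun _ => True); split; [apply open_full|]; split; [exact I|]. tauto.
  - exists (fun y => W0 y /\ W1 y); split; [apply open_inter; auto|]; split; [auto|].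
    intros y [W0y W1y] m B Hm HB. destruct (classic (In B l)) as [Hin | Hnin].
    + apply (HW1l (m, B)); [apply in_prod; [apply in_seq; lia | exact Hin] | exact W1y | exact HB].
    + assert (Hmiss : ~ meets B W0) by (intro; apply Hnin, Hl; assumption).
      destruct (sep_fn_spec n m B HB) as [_ [_ [Hzero _]]].
      rewrite (Hzero x), (Hzero y); [rewrite Rminus_0_r, Rabs_R0; lra | |];
        intro Hb; apply Hmiss; eexists; split; eauto.
Qed.

Lemma dist_continuous x eps : 0 < eps ->
  exists W, is_open t W /\ W x /\ forall y, W y -> dist x y < eps.
Proof.
  intros Heps. destruct (classic (isolated t x)) as [Hiso | Hiso].
  { exists (fun y => y = x); repeat split; auto. intros y ->. rewrite dist_refl; exact Heps. }
  destruct (inv_INR_small (eps / 2)) as [N HN]; [lra|].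
  destruct (common_nbhd t x (fun n W => forall y, W y -> forall m B, (m < N)%nat -> Bs n B ->
      Rabs (sep_fn m B x - sep_fn m B y) <= eps / 2) (seq 0 N)) as [W [HW [Wx HWn]]].
  - intros n W1 W2 H1 H12 y Wy; apply H1, H12, Wy.
  - intros n _. apply level_gaps_near; [exact Hiso | lra].
  - exists W; split; [exact HW|]; split; [exact Wx|]. intros y Wy.
    apply Rle_lt_trans with (eps / 2); [|lra]. apply dist_le; [lra|]. intros n m B HB.
    pose proof (INR_S_ge1 (n + m)). pose proof (INR_S_ge1 N).
    assert (Hlarge : (N <= n + m)%nat -> weighted_gap n m B x y <= eps / 2).
    { (* a large level: the weight is below 1/(N+1) *)
      intros Hnm. destruct (weighted_gap_bounds n m B x y HB).
      assert (/ INR (S (n + m)) <= / INR (S N))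
        by (apply Rinv_le_contravar; [lra | apply le_INR; lia]). lra. }
    destruct (Nat.lt_ge_cases n N), (Nat.lt_ge_cases m N); [|apply Hlarge; lia ..].
    (* both levels small: use the local estimate; the weight is at most 1 *)
    pose proof (HWn n ltac:(apply in_seq; lia) y Wy m B ltac:(lia) HB).
    unfold weighted_gap, Rdiv.
    assert (/ INR (S (n + m)) <= 1) by (rewrite <- Rinv_1; apply Rinv_le_contravar; lra).
    assert (0 < / INR (S (n + m))) by (apply Rinv_0_lt_compat; lra).
    pose proof (Rabs_pos (sep_fn m B x - sep_fn m B y)). nra.
Qed.

Lemma metrizable_of_base : metrizable t.
Proof.
  exists dist. split; [split; [|split]|].
  - intros x y; split; [apply dist_separates | intros ->; apply dist_refl].
  - intros x y; apply Rle_antisym; apply dist_sym_le.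
  - apply dist_triangle.
  - intros U; split.
    + intros HU x Ux. destruct (sep_fn_at_point U x HU Ux) as [n [m [B [HB [HBU Hx]]]]].
      exists (/ INR (S (n + m))). split; [apply Rinv_0_lt_compat; pose proof (INR_S_ge1 (n + m)); lra|].
      intros y Hy. apply HBU, (dist_ball_inside n m B x y HB Hx Hy).
    + intros HU. apply open_local. intros x Ux. destruct (HU x Ux) as [eps [Heps Hball]].
      destruct (dist_continuous x eps Heps) as [W [HW [Wx HWd]]]. exists W; auto.
Qed.

End Metrization.

Section WellOrdering.
Import eqtype choice boolp.

Lemma least_elements (T : Type) : exists R : T -> T -> Prop,
  forall P : T -> Prop, (exists x, P x) -> exists! z, P z /\ forall y, P y -> R z y.
Proof.
  destruct (wochoice.well_ordering_principle {classic T}) as [R Rwo].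
  exists (fun x y => R x y = true). intros P [x Px].
  destruct (Rwo (fun y => asbool (P y))) as [z [[Pz lbz] uniq]];
    [exists x; apply asboolT, Px|].
  exists z. split; [split|].
  - apply asboolW, Pz.
  - intros y Py. apply lbz, asboolT, Py.
  - intros z' [Pz' lbz']. apply uniq. split.
    + apply asboolT, Pz'.
    + intros y Py. apply lbz', asboolW, Py.
Qed.

End WellOrdering.

(* Well-order the
   points; for radii r = 1/(n+1) and e = 1/(i+1) and each point s, let V s be
   the union of the balls B(x, e) over the points x for which s is the least
   point of B(x, r) and B(x, 3e) lies in B(s, r).  If V s and V s' come within
   e of each other, then s and s' are both least in B(x, r) /\ B(x', r) for
   suitable x, x', so s = s': each family {V s} is discrete. *)
Section Stone.
Context {X : Type} (t : topology X) (d : X -> X -> R).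
Hypothesis Hd : is_metric d.
Hypothesis Htop : forall U, is_open t U <-> metric_open d U.
Variable Rw : X -> X -> Prop.
Hypothesis Hleast : forall P : X -> Prop, (exists x, P x) ->
  exists! z, P z /\ forall y, P y -> Rw z y.

Lemma d_sym x y : d x y = d y x.
Proof. apply Hd. Qed.
Lemma d_triangle x y z : d x z <= d x y + d y z.
Proof. apply Hd. Qed.
Lemma d_refl x : d x x = 0.
Proof. apply Hd; reflexivity. Qed.

Lemma ball_open x r : is_open t (fun y => d x y < r).
Proof.
  apply Htop. intros y Hy. exists (r - d x y); split; [lra|].
  intros z Hz. pose proof (d_triangle x y z). lra.
Qed.

Definition least_in_ball r x s : Prop :=
  d s x < r /\ forall s', d s' x < r -> Rw s s'.

Definition stone_set r e s : X -> Prop := fun y => exists x,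
  least_in_ball r x s /\ (forall z, d x z < 3 * e -> d s z < r) /\ d x y < e.

Definition radius n : R := / INR (S n).

Lemma radius_pos n : 0 < radius n.
Proof. apply Rinv_0_lt_compat. pose proof (INR_S_ge1 n). lra. Qed.

Definition stone_family (k : nat) (A : X -> Prop) : Prop :=
  exists s, A = stone_set (radius (fst (of_nat k))) (radius (snd (of_nat k))) s.

Lemma stone_set_open r e s : is_open t (stone_set r e s).
Proof.
  apply Htop. intros y [x [Hleast_x [Hinside Hxy]]]. exists (e - d x y); split; [lra|].
  intros z Hz. exists x; split; [exact Hleast_x|]; split; [exact Hinside|].
  pose proof (d_triangle x y z). lra.
Qed.

Lemma stone_set_in_ball r e s y : 0 < e -> stone_set r e s y -> d s y < r.
Proof. intros He [x [_ [Hinside Hxy]]]. apply Hinside. lra. Qed.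

Lemma stone_sets_close r e s s' y1 y2 :
  stone_set r e s y1 -> stone_set r e s' y2 -> d y1 y2 < e -> s = s'.
Proof.
  intros [x1 [[Hs1 Hmin1] [Hin1 D1]]] [x2 [[Hs2 Hmin2] [Hin2 D2]]] D.
  assert (Hx12 : d x1 x2 < 3 * e).
  { pose proof (d_triangle x1 y1 x2); pose proof (d_triangle y1 y2 x2).
    rewrite (d_sym y2 x2) in *. lra. }
  assert (Hs2' : d s x2 < r) by (apply Hin1; lra).
  assert (Hs1' : d s' x1 < r) by (apply Hin2; rewrite d_sym; lra).
  (* s and s' are both least elements of B(x1, r) /\ B(x2, r) *)
  destruct (Hleast (fun y => d y x1 < r /\ d y x2 < r)) as [z [_ Huniq]];
    [exists s; auto|].
  transitivity z; [symmetry|]; apply Huniq.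
  - split; [split; assumption | intros y [Hy _]; apply Hmin1, Hy].
  - split; [split; assumption | intros y [_ Hy]; apply Hmin2, Hy].
Qed.

Lemma stone_base_is_base : is_base t (sigma_union stone_family).
Proof.
  split.
  - intros U [k [s ->]]. apply stone_set_open.
  - intros U x HU Ux. destruct (proj1 (Htop U) HU x Ux) as [eps [Heps Hball]].
    destruct (inv_INR_small (eps / 2)) as [n Hn]; [lra|].
    destruct (Hleast (fun s => d s x < radius n)) as [s [[Hs Hsmin] _]].
    { exists x. rewrite d_refl. apply radius_pos. }
    destruct (inv_INR_small ((radius n - d s x) / 3)) as [i Hi]; [lra|].
    exists (stone_set (radius n) (radius i) s). split; [|split].
    + exists (to_nat (n, i)), s. unfold stone_family. rewrite cancel_of_to. reflexivity.
    + exists x. split; [split; auto|]. split.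
      * intros z Hz. pose proof (d_triangle s x z). unfold radius in *. lra.
      * rewrite d_refl. apply radius_pos.
    + intros y Hy. apply Hball. pose proof (stone_set_in_ball _ _ _ _ (radius_pos i) Hy).
      pose proof (d_triangle x s y). rewrite (d_sym x s) in *. unfold radius in *. lra.
Qed.

Lemma stone_family_discrete k : discrete_nonisol t (stone_family k).
Proof.
  intros z _. set (e := radius (snd (of_nat k))). assert (He : 0 < e) by apply radius_pos.
  exists (fun y => d z y < e / 2). split; [apply ball_open|]. split; [rewrite d_refl; lra|].
  intros A B [s ->] [s' ->] [y1 [A1 W1]] [y2 [B2 W2]].
  replace s' with s; [reflexivity|].
  apply (stone_sets_close _ e s s' y1 y2 A1 B2).
  pose proof (d_triangle y1 z y2). rewrite (d_sym y1 z) in *. lra.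
Qed.

End Stone.

Lemma metrizable_sigma_discrete {X} (t : topology X) :
  metrizable t -> has_sigma_discrete_base_nonisol t.
Proof.
  intros [d [Hd Htop]]. destruct (least_elements X) as [Rw Hleast].
  exists (stone_family d Rw). split.
  - apply stone_base_is_base; assumption.
  - apply stone_family_discrete; assumption.
Qed.

Lemma sigma_discrete_locally_finite {X} (t : topology X) :
  has_sigma_discrete_base_nonisol t -> has_sigma_locally_finite_base_nonisol t.
Proof.
  intros [Bs [Hbase Hdisc]]. exists Bs; split; [exact Hbase|]. intros i x Hx.
  destruct (Hdisc i x Hx) as [W [HW [Wx Hone]]]. exists W; split; [exact HW|]; split; [exact Wx|].
  destruct (classic (exists A, Bs i A /\ meets A W)) as [[A [HA HAW]] | Hnone].
  - exists (A :: nil). intros B HB HBW. left. apply (Hone A B); assumption.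
  - exists nil. intros B HB HBW. apply Hnone; exists B; auto.
Qed.

Theorem mainTheorem10 (X : Type) (t : topology X) :
  T1_space t -> regular_space t ->
  (metrizable t <-> has_sigma_discrete_base_nonisol t) /\
  (metrizable t <-> has_sigma_locally_finite_base_nonisol t).
Proof.
  intros HT1 Hreg.
  assert (Hlf_metr : has_sigma_locally_finite_base_nonisol t -> metrizable t)
    by (intros [Bs [Hbase Hlf]]; exact (metrizable_of_base t HT1 Hreg Bs Hbase Hlf)).
  split; split.
  - apply metrizable_sigma_discrete.
  - intros H; apply Hlf_metr, sigma_discrete_locally_finite, H.
  - intros H; apply sigma_discrete_locally_finite, metrizable_sigma_discrete, H.
  - exact Hlf_metr.
Qed.
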